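(* Let $G=(V,E)$ be a finite undirected unweighted simple graph, let $\mathbf{L}$ be its Laplacian matrix and let $\mathbf{W}=(\mathbf{I}+\mathbf{L})^{-1}=(w_{ij})$ be its forest matrix. For $u\in V$ let $\mathcal{F}_{uu}$ be the set of spanning rooted forests of $G$ in which $u$ is a root, and define $$s(u)=\frac{1}{|\mathcal{F}_{uu}|}\sum_{F\in\mathcal{F}_{uu}}|F|_u,$$ where $|F|_u$ is the number of vertices of the tree rooted at $u$ in $F$. Define $\mathrm{ForestSim}(u,v)=\frac{\min(s(u),s(v))}{\max(s(u),s(v))}$. Then for all $u,v\in V$, $$\mathrm{ForestSim}(u,v)=\frac{\min(w_{uu},w_{vv})}{\max(w_{uu},w_{vv})}.$$
   Context: For $G$ with adjacency matrix $\mathbf{A}$ and diagonal degree matrix $\mathbf{D}=\mathrm{diag}(d_1,\dots,d_n)$, the Laplacian is $\mathbf{L}=\mathbf{D}-\mathbf{A}$, and $\mathbf{I}$ is the $n\times n$ identity matrix. A spanning forest of $G$ is an acyclic subgraph containing all vertices of $G$; a spanning rooted forest is a spanning forest with one root marked in each of its trees. *)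

From HB Require Import structures.
From mathcomp Require Import all_boot all_order all_algebra.
From mathcomp Require Import boolp.
Set Implicit Arguments. Unset Strict Implicit. Unset Printing Implicit Defensive.
Import Order.TTheory GRing.Theory Num.Theory.
Local Open Scope ring_scope.

Definition simple_graph n (e : rel 'I_n) : Prop :=
  symmetric e /\ irreflexive e.

Section Graph.
Variables (R : realFieldType) (n : nat) (e : rel 'I_n).

Definition degree (i : 'I_n) : nat := #|[set j | e i j]|.
Definition adjmx : 'M[R]_n := \matrix_(i, j) (if e i j then 1 else 0).
Definition degmx : 'M[R]_n := \matrix_(i, j) (if i == j then (degree i)%:R else 0).
Definition laplacian : 'M[R]_n := degmx - adjmx.
Definition forest_matrix : 'M[R]_n := invmx (1%:M + laplacian).

Definition is_edge (f : {set 'I_n}) : bool :=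
  [exists x, exists y, e x y && (f == [set x; y])].

Definition sub_adj (F : {set {set 'I_n}}) : rel 'I_n :=
  fun x y => (x != y) && ([set x; y] \in F).

Definition acyclic (F : {set {set 'I_n}}) : Prop :=
  forall s : seq 'I_n, (3 <= size s)%N -> uniq s -> ~~ cycle (sub_adj F) s.

(* spanning forest of G: an acyclic subgraph containing all vertices
   (the vertex set is always all of 'I_n, so it is given by its edge set). *)
Definition spanning_forest (F : {set {set 'I_n}}) : Prop :=
  (forall f, f \in F -> is_edge f) /\ acyclic F.

Definition spanning_rooted_forest (FR : {set {set 'I_n}} * {set 'I_n}) : Prop :=
  spanning_forest FR.1 /\
  forall x, exists! r, r \in FR.2 /\ connect (sub_adj FR.1) x r.

Definition rooted_forests_at (u : 'I_n) : {set {set {set 'I_n}} * {set 'I_n}} :=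
  [set FR | `[< spanning_rooted_forest FR >] && (u \in FR.2)].

Definition tree_size (F : {set {set 'I_n}}) (u : 'I_n) : nat :=
  #|[set x | connect (sub_adj F) u x]|.

Definition s_val (u : 'I_n) : R :=
  (\sum_(FR in rooted_forests_at u) tree_size FR.1 u)%:R
    / (#|rooted_forests_at u|)%:R.

Definition forest_sim (u v : 'I_n) : R :=
  Num.min (s_val u) (s_val v) / Num.max (s_val u) (s_val v).

End Graph.

(** For a root u and a vertex j let c_u(j) be the number of spanning rooted
   forests in which u is a root and j lies in the tree of u.  For i <> u, the
   rooted forests in which i is not a root are obtained exactly once from a
   rooted forest in which i is a root by hanging the tree of i below a
   neighbour v outside it; counting through this bijection gives
   (1 + d_i) c_u(i) = sum_{j ~ i} c_u(j).  Hence (I + L) c_u is supported on u,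
   and since the columns of I + L sum to 1 its u-entry is
   sum_j c_u(j) = sum_{F in F_uu} |F|_u.  So W = (I + L)^-1 has entries
   w_ju = c_u(j) / sum_j c_u(j), and s(u) = 1 / w_uu because c_u(u) = |F_uu|;
   inversion reverses the order of positive numbers, which leaves the ratio
   min/max unchanged. *)

From HB Require Import structures.
From mathcomp Require Import all_boot all_order all_algebra.
From mathcomp Require Import boolp ring zify.
Import Order.TTheory GRing.Theory Num.Theory.
Set Implicit Arguments. Unset Strict Implicit. Unset Printing Implicit Defensive.

Section EdgeSets.
Variable n : nat.
Implicit Types (F : {set {set 'I_n}}) (a b x y : 'I_n).
Local Notation conn F := (connect (sub_adj F)).

Lemma sub_adj_sym F : symmetric (sub_adj F).
Proof. by move=> x y; rewrite /sub_adj eq_sym setUC. Qed.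

Lemma connect_sub_adj_sym F : symmetric (conn F).
Proof. exact/sym_connect_sym/sub_adj_sym. Qed.

Lemma connect_sub_adj_neq F x y : ~~ conn F x y -> x != y.
Proof. by apply: contraNneq => ->; apply: connect0. Qed.

Lemma sub_adj_subset F F' : F \subset F' -> subrel (sub_adj F) (sub_adj F').
Proof. by move=> sFF' x y /andP[xy xyF]; rewrite /sub_adj xy (subsetP sFF'). Qed.

Lemma connect_sub_adj_subset F F' x y :
  F \subset F' -> conn F x y -> conn F' x y.
Proof. by move/sub_adj_subset=> sub; apply: connect_sub => a b /sub/connect1. Qed.

Lemma set2_inj a b c d : [set a; b] = [set c; d] ->
  (a = c /\ b = d) \/ (a = d /\ b = c).
Proof.
move=> E.
have /set2P ha : a \in [set c; d] by rewrite -E set21.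
have /set2P hb : b \in [set c; d] by rewrite -E set22.
have /set2P hc : c \in [set a; b] by rewrite E set21.
have /set2P hd : d \in [set a; b] by rewrite E set22.
by case: ha hb hc hd => -> [] -> [] ? [] ?; subst; auto.
Qed.

Lemma set2_neq a b x y : a != x -> a != y -> [set x; y] != [set a; b].
Proof.
move=> ax ay; apply/eqP => E.
have /set2P : a \in [set x; y] by rewrite E set21.
by case=> /eqP; rewrite ?(negPf ax) ?(negPf ay).
Qed.

Lemma sub_adj_setU1 F a b x y : sub_adj (F :|: [set [set a; b]]) x y ->
  [set x; y] != [set a; b] -> sub_adj F x y.
Proof. by rewrite /sub_adj in_setU in_set1 => /andP[-> /orP[-> | ->]]. Qed.

Lemma sub_adj_setU1_avoid F a b x y : x != a -> y != a ->
  sub_adj (F :|: [set [set a; b]]) x y -> sub_adj F x y.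
Proof. by move=> xa ya /sub_adj_setU1; apply; apply: set2_neq; rewrite eq_sym. Qed.

Lemma sub_adj_setD1_avoid F a b x y : x != a -> y != a ->
  sub_adj F x y -> sub_adj (F :\ [set a; b]) x y.
Proof.
move=> xa ya /andP[xy xyF]; rewrite /sub_adj xy in_setD1 xyF andbT.
by apply: set2_neq; rewrite eq_sym.
Qed.

Lemma sub_adj_setU1_from F a b y : sub_adj (F :|: [set [set a; b]]) a y ->
  sub_adj F a y \/ y = b.
Proof.
move=> hay; have [E|NE] := eqVneq [set a; y] [set a; b]; last first.
  by left; apply: sub_adj_setU1 hay NE.
case/andP: hay => ay _.
by case: (set2_inj E) => [[_ ->]|[_ ya]]; [right | rewrite ya eqxx in ay].
Qed.

Lemma connect_sub_adj_setU1 F a b x y : conn (F :|: [set [set a; b]]) x y ->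
  conn F x y \/ ((conn F x a \/ conn F x b) /\ (conn F a y \/ conn F b y)).
Proof.
case/connectP=> p; elim: p x => [|z p IH] x /=; first by move=> _ ->; left.
case/andP=> hxz hp hy.
have [E|NE] := eqVneq [set x; z] [set a; b].
  have [xab zab] : (conn F x a \/ conn F x b) /\ (conn F a z \/ conn F b z).
    by case: (set2_inj E) => -[-> ->]; split; (left + right).
  case: (IH z hp hy) => [zy | [_ aby]]; right; split => //.
  by case: zab => [az|bz]; [left | right]; apply: connect_trans zy.
have xz : conn F x z by apply/connect1/(sub_adj_setU1 hxz).
case: (IH z hp hy) => [zy | [zab aby]]; first by left; apply: connect_trans xz zy.
by right; split => //; case: zab => [za|zb]; [left | right]; apply: connect_trans xz _.
Qed.

Lemma disconnect_set2_notin F x y : ~~ conn F y x -> [set x; y] \notin F.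
Proof.
move=> nyx; have yx := connect_sub_adj_neq nyx.
by apply: contra nyx => xyF; apply: connect1; rewrite /sub_adj yx setUC xyF.
Qed.

Lemma setU1_set2_mem F1 F2 x y1 y2 : y1 != x -> y1 != y2 ->
  F1 :|: [set [set x; y1]] = F2 :|: [set [set x; y2]] -> [set x; y1] \in F2.
Proof.
move=> y1x y12 E.
have : [set x; y1] \in F1 :|: [set [set x; y1]] by rewrite in_setU set11 orbT.
rewrite E in_setU in_set1 => /orP[// | /eqP/set2_inj].
by case=> -[_ y1E]; rewrite y1E eqxx in y12 y1x.
Qed.

Lemma acyclic_subset F F' : F \subset F' -> acyclic F' -> acyclic F.
Proof.
move=> sFF' acF' s s3 us; apply: contra (acF' s s3 us).
exact/sub_cycle/sub_adj_subset.
Qed.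

Lemma acyclic_setU1 F a b : acyclic F -> a != b -> ~~ conn F a b ->
  acyclic (F :|: [set [set a; b]]).
Proof.
set F' := F :|: _ => acF ab nab s s3 us; apply/negP => cs.
have avoidF : {in [pred z | z != a] &, subrel (sub_adj F') (sub_adj F)}.
  by move=> x y xa ya; apply: sub_adj_setU1_avoid.
have [as_ | ans] := boolP (a \in s); last first.
  have /negP := acF s s3 us; apply; apply: (sub_in_cycle avoidF) cs.
  by apply/allP => z zs; apply: contraNneq ans => <-.
case: (rot_to as_) => k p E.
have cap : cycle (sub_adj F') (a :: p) by rewrite -E rot_cycle.
have uap : uniq (a :: p) by rewrite -E rot_uniq.
have /= p2 : 2 < size (a :: p) by rewrite -E size_rot.
case: p {E} cap uap p2 => [|h [|h2 q]] // cap uap _.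
move: cap; rewrite /cycle rcons_path => /andP[]; rewrite [path _ a _]/=.
move=> /andP[ah hp]; rewrite [last _ _]/=; set l := last _ _ => la.
have [anhq hnq] : a \notin h :: h2 :: q /\ h \notin h2 :: q.
  by move: (uap); rewrite cons_uniq => /andP[-> /andP[-> _]].
have hl : h != l by apply: contraNneq hnq => ->; apply: mem_last.
have avoid_a : all [pred z | z != a] (h :: h2 :: q).
  by apply/allP => z zq; apply: contraNneq anhq => <-.
have chl : conn F h l.
  by apply/connectP; exists (h2 :: q); first exact: (sub_in_path avoidF avoid_a hp).
have al : sub_adj F' a l by rewrite sub_adj_sym.
case: (sub_adj_setU1_from ah) => [ahF | hb];
  case: (sub_adj_setU1_from al) => [alF | lb].
- have /negP := acF [:: a, h, h2 & q] isT uap; apply.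
  rewrite /cycle rcons_path [last _ _]/= -/l -sub_adj_sym alF andbT /= ahF.
  exact: (sub_in_path avoidF avoid_a hp).
- by case/negP: nab; rewrite -lb; apply: connect_trans (connect1 ahF) chl.
- case/negP: nab; rewrite -hb connect_sub_adj_sym.
  by apply: connect_trans chl (connect1 _); rewrite sub_adj_sym.
- by move: hl; rewrite hb lb eqxx.
Qed.

Lemma acyclic_setD1_disconnect F x y : acyclic F ->
  x != y -> [set x; y] \in F -> ~~ conn (F :\ [set x; y]) y x.
Proof.
set F' := F :\ _ => acF xy xyF; apply/negP => /connectP[w0 w0P xE].
have F'F : F' \subset F by apply: subD1set.
case: (shortenP w0P) xE => -[|w1 [|w2 w]] wP uw _ /= xE.
- by rewrite xE eqxx in xy.
- by move: wP; rewrite -xE /= /sub_adj /F' in_setD1 setUC eqxx andbF.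
have /negP := acF [:: y, w1, w2 & w] isT uw; apply.
rewrite /cycle rcons_path [last _ _]/= -xE.
have -> : sub_adj F x y by rewrite /sub_adj xy xyF.
by rewrite andbT (sub_path (sub_adj_subset F'F) wP).
Qed.

End EdgeSets.

Section RootedForests.
Variables (n : nat) (e : rel 'I_n).
Hypothesis e_sym : symmetric e.

Local Notation conn F := (connect (sub_adj F)).
Local Notation srf := (spanning_rooted_forest e).
Local Notation rforest := ({set {set 'I_n}} * {set 'I_n})%type.
Implicit Types (FR : rforest) (i u v x y : 'I_n).

Lemma is_edge_set2 x y : is_edge e [set x; y] = e x y.
Proof.
apply/existsP/idP => [[a /existsP[b /andP[eab /eqP/set2_inj]]] | exy].
  by case=> -[-> ->]; rewrite // e_sym.
by exists x; apply/existsP; exists y; rewrite exy eqxx.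
Qed.

Lemma srf_edge FR f : srf FR -> f \in FR.1 -> is_edge e f.
Proof. by case=> -[edgeF _] _; apply: edgeF. Qed.

Lemma srf_acyclic FR : srf FR -> acyclic FR.1.
Proof. by case=> -[]. Qed.

Lemma srf_root FR x : srf FR -> exists2 r, r \in FR.2 & conn FR.1 x r.
Proof. by case=> _ /(_ x) [r [[rS xr] _]]; exists r. Qed.

Lemma srf_root_uniq FR x r1 r2 : srf FR -> r1 \in FR.2 -> conn FR.1 x r1 ->
  r2 \in FR.2 -> conn FR.1 x r2 -> r1 = r2.
Proof.
case=> _ /(_ x) [r [_ uniq_r]] r1S xr1 r2S xr2.
by rewrite -(uniq_r r1 (conj r1S xr1)) -(uniq_r r2 (conj r2S xr2)).
Qed.

Lemma srf_roots_connect FR r1 r2 : srf FR -> r1 \in FR.2 -> r2 \in FR.2 ->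
  conn FR.1 r1 r2 -> r1 = r2.
Proof. by move=> srfFR r1S r2S; apply: srf_root_uniq srfFR r1S (connect0 _ _) r2S. Qed.

Definition hang i v FR : rforest := (FR.1 :|: [set [set i; v]], FR.2 :\ i).

Lemma connect_hang FR i v x y : srf FR -> i \in FR.2 -> ~~ conn FR.1 v i ->
  y \in FR.2 -> y != i ->
  conn (hang i v FR).1 x y = conn FR.1 x y || conn FR.1 x i && conn FR.1 v y.
Proof.
move=> srfFR iS nvi yS yi; have vi := connect_sub_adj_neq nvi.
have subF : FR.1 \subset (hang i v FR).1 by apply: subsetUl.
apply/idP/idP.
  case/connect_sub_adj_setU1 => [-> // | [xiv [iy | vy]]].
    by move: yi; rewrite (srf_roots_connect srfFR iS yS iy) eqxx.
  by case: xiv => [-> | xv]; rewrite ?vy ?orbT ?(connect_trans xv vy).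
case/orP => [/(connect_sub_adj_subset subF) // | /andP[xi vy]].
apply: connect_trans (connect_sub_adj_subset subF xi) _.
apply: connect_trans (connect_sub_adj_subset subF vy).
by apply: connect1; rewrite /sub_adj eq_sym vi in_setU set11 orbT.
Qed.

Lemma srf_hang FR i v : srf FR -> i \in FR.2 -> e i v -> ~~ conn FR.1 v i ->
  srf (hang i v FR).
Proof.
move=> srfFR iS eiv nvi; have vi := connect_sub_adj_neq nvi.
split; first split.
- move=> f; rewrite in_setU in_set1 => /orP[fF | /eqP->].
    exact: srf_edge srfFR fF.
  by rewrite is_edge_set2.
- apply: acyclic_setU1 (srf_acyclic srfFR) _ _; first by rewrite eq_sym.
  by rewrite connect_sub_adj_sym.
move=> x; have [r rS xr] := srf_root x srfFR; have [rv rvS vrv] := srf_root v srfFR.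
have rvi : rv != i by apply: contraNneq nvi => <-.
pose rho := if r == i then rv else r.
have rhoS : rho \in (hang i v FR).2.
  by rewrite /rho in_setD1; have [_ | ri] := eqVneq r i; rewrite ?rvi ?rvS ?ri.
have hangE := connect_hang _ srfFR iS nvi.
exists rho; split.
  split => //; move/setD1P: rhoS => [rhoi rhoS']; rewrite hangE //.
  by rewrite /rho; have [<- | _] := eqVneq r i; rewrite ?xr ?vrv ?orbT.
move=> r' [/setD1P[r'i r'S]]; rewrite hangE // => /orP[xr' | /andP[xi vr']].
  by rewrite /rho (srf_root_uniq srfFR rS xr r'S xr') (negPf r'i).
rewrite /rho (srf_root_uniq srfFR rS xr iS xi) eqxx.
exact: srf_root_uniq srfFR rvS vrv r'S vr'.
Qed.

Lemma hang_inj_neighbour FR1 FR2 i v1 v2 : srf FR1 -> srf FR2 ->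
  i \in FR1.2 -> i \in FR2.2 -> ~~ conn FR1.1 v1 i -> ~~ conn FR2.1 v2 i ->
  hang i v1 FR1 = hang i v2 FR2 -> v1 = v2.
Proof.
case: FR1 FR2 => [F1 S1] [F2 S2] /= srf1 srf2 iS1 iS2 n1 n2 [EF ES].
apply/eqP; apply: contraT => v12.
have v1i := connect_sub_adj_neq n1; have v2i := connect_sub_adj_neq n2.
have iv1F2 : [set i; v1] \in F2 := setU1_set2_mem v1i v12 EF.
have iv2F1 : [set i; v2] \in F1.
  by apply: setU1_set2_mem v2i _ (esym EF); rewrite eq_sym.
have [r1 r1S v1r1] := srf_root v1 srf1; rewrite /= in r1S v1r1.
have r1i : r1 != i by apply: contraNneq n1 => <-.
set F0 := F1 :\ [set i; v2].
have F0F1 : F0 \subset F1 by apply: subD1set.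
have F0F2 : F0 \subset F2.
  apply/subsetP => f /setD1P[fE fF1].
  have : f \in F1 :|: [set [set i; v1]] by rewrite in_setU fF1.
  by rewrite EF in_setU in_set1 (negPf fE) orbF.
have v1r1' : conn F0 v1 r1.
  move: v1r1; rewrite -[F1](setD1K iv2F1) setUC -/F0.
  case/connect_sub_adj_setU1 => [// | [[v1i' | v1v2] _]]; case/negP: n1.
    exact: connect_sub_adj_subset F0F1 v1i'.
  apply: connect_trans (connect_sub_adj_subset F0F1 v1v2) _.
  by apply: connect1; rewrite /sub_adj v2i setUC iv2F1.
have r1S2 : r1 \in S2 by rewrite -(setD1K iS2) -ES !inE r1i r1S orbT.
have v1i2 : conn F2 v1 i.
  by apply: connect1; rewrite /sub_adj v1i setUC iv1F2.
have v1r1_2 := connect_sub_adj_subset F0F2 v1r1'.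
by move: r1i; rewrite (srf_root_uniq srf2 r1S2 v1r1_2 iS2 v1i2) eqxx.
Qed.

Lemma hang_inj FR1 FR2 i v1 v2 : srf FR1 -> srf FR2 ->
  i \in FR1.2 -> i \in FR2.2 -> ~~ conn FR1.1 v1 i -> ~~ conn FR2.1 v2 i ->
  hang i v1 FR1 = hang i v2 FR2 -> v1 = v2 /\ FR1 = FR2.
Proof.
move=> srf1 srf2 iS1 iS2 n1 n2 E.
have v12 := hang_inj_neighbour srf1 srf2 iS1 iS2 n1 n2 E; subst v2; split => //.
case: FR1 FR2 E n1 n2 {srf1 srf2} iS1 iS2 => [F1 S1] [F2 S2] [EF ES] /= n1 n2 iS1 iS2.
congr (_, _); last by rewrite -(setD1K iS1) ES setD1K.
have [n1' n2'] := (disconnect_set2_notin n1, disconnect_set2_notin n2).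
apply/setP => f; move/setP/(_ f): EF; rewrite !in_setU !in_set1.
by have [-> | _] := eqVneq f [set i; v1]; rewrite ?orbF // (negPf n1') (negPf n2').
Qed.

Lemma srf_cut F S i v r : srf (F, S) -> [set i; v] \in F -> r \in S ->
  conn F i r -> conn (F :\ [set i; v]) v r -> ~~ conn (F :\ [set i; v]) v i ->
  srf (F :\ [set i; v], i |: S).
Proof.
set F' := F :\ _ => srfF ivF rS ir vr nvi.
have F'F : F' \subset F by apply: subD1set.
have nconn_iS rho : rho \in S -> ~~ conn F' i rho.
  move=> rhoS; apply/negP => irho; case/negP: nvi.
  have /(srf_root_uniq srfF rS ir rhoS) r_rho := connect_sub_adj_subset F'F irho.
  by apply: connect_trans vr _; rewrite r_rho connect_sub_adj_sym.
split; first split.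
- by move=> f /(subsetP F'F); apply: srf_edge srfF.
- exact: acyclic_subset F'F (srf_acyclic srfF).
move=> x /=; have [rx rxS xrx] := srf_root x srfF.
have [rho rhoS xrho] : exists2 rho, rho \in i |: S & conn F' x rho.
  move: xrx; rewrite /= -(setD1K ivF) setUC -/F'.
  case/connect_sub_adj_setU1 => [xrx' | [[xi | xv] _]].
  - by exists rx; rewrite ?in_setU1 ?rxS ?orbT.
  - by exists i; rewrite ?setU11.
  - by exists r; rewrite ?in_setU1 ?rS ?orbT //; apply: connect_trans xv vr.
exists rho; split => // r' [r'S xr'].
case/setU1P: rhoS xrho => [-> | rhoS] xrho; case/setU1P: r'S xr' => [-> | r'S] xr' //.
- by case/negP: (nconn_iS _ r'S); apply: connect_trans xr'; rewrite connect_sub_adj_sym.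
- by case/negP: (nconn_iS _ rhoS); apply: connect_trans xrho; rewrite connect_sub_adj_sym.
- have [xrhoF xr'F] := (connect_sub_adj_subset F'F xrho, connect_sub_adj_subset F'F xr').
  exact: srf_root_uniq srfF rhoS xrhoF r'S xr'F.
Qed.

Lemma hang_surj FR i : srf FR -> i \notin FR.2 -> exists v FR',
  [/\ srf FR', i \in FR'.2, e i v, ~~ conn FR'.1 v i & FR = hang i v FR'].
Proof.
case: FR => F S srfF /= iS; have [r /= rS ir] := srf_root i srfF.
case/connectP: (ir) => p0 /shortenP[[|v q] ivq uivq _ rE].
  by rewrite rE in rS; rewrite rS in iS.
move: ivq; rewrite /= => /andP[/andP[iv ivF] vq].
set F' := F :\ [set i; v].
have vr : conn F' v r.
  apply/connectP; exists q => //.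
  have avoid_i : all [pred z | z != i] (v :: q).
    have /andP[ivq _] := uivq.
    by apply/allP => z zq; apply: contraNneq ivq => <-.
  have subF : {in [pred z | z != i] &, subrel (sub_adj F) (sub_adj F')}.
    by move=> x y xi yi; apply: sub_adj_setD1_avoid.
  exact: (sub_in_path subF avoid_i vq).
have nvi : ~~ conn F' v i := acyclic_setD1_disconnect (srf_acyclic srfF) iv ivF.
exists v, (F', i |: S); split => //=.
- exact: srf_cut srfF ivF rS ir vr nvi.
- exact: setU11.
- by rewrite -(is_edge_set2 i v); apply: srf_edge srfF ivF.
- by rewrite /hang /= setUC setD1K // setU1K.
Qed.

End RootedForests.

Section RootTreeCount.
Variables (n : nat) (e : rel 'I_n).
Hypothesis e_sym : symmetric e.

Local Notation conn F := (connect (sub_adj F)).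
Local Notation srf := (spanning_rooted_forest e).
Local Notation rforest := ({set {set 'I_n}} * {set 'I_n})%type.
Implicit Types (FR : rforest) (i j u v : 'I_n).

Definition rooted_forests : {set rforest} := [set FR | `[< srf FR >]].

Lemma in_rooted_forests FR : (FR \in rooted_forests) = `[< srf FR >].
Proof. by rewrite inE. Qed.

Lemma sum_nonroot_hang i (G : rforest -> nat) :
  \sum_(FR in rooted_forests | i \notin FR.2) G FR =
  \sum_(FR in rooted_forests | i \in FR.2)
     \sum_(v | e i v && ~~ conn FR.1 v i) G (hang i v FR).
Proof.
pose D := [set p : rforest * 'I_n | [&& p.1 \in rooted_forests, i \in p.1.2,
                                      e i p.2 & ~~ conn p.1.1 p.2 i]].
have nonrootE : [set FR in rooted_forests | i \notin FR.2] = (fun p => hang i p.2 p.1) @: D.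
  apply/setP => FR; rewrite !inE; apply/andP/imsetP.
    case=> /asboolP srfFR iS.
    have [v [FR' [srfFR' iS' eiv nvi ->]]] := hang_surj e_sym srfFR iS.
    by exists (FR', v); rewrite // !inE /= iS' eiv nvi !andbT; apply/asboolP.
  case=> -[FR' v]; rewrite !inE /= => /and4P[/asboolP srfFR' iS' eiv nvi] ->.
  by split; [apply/asboolP; apply: srf_hang | rewrite /hang /= setD11].
rewrite pair_big_dep (eq_bigl (mem [set FR in rooted_forests | i \notin FR.2])).
  rewrite nonrootE big_imset; first by apply: eq_bigl => p; rewrite !inE andbA.
  move=> [FR1 v1] [FR2 v2]; rewrite !inE /= => /and4P[/asboolP srf1 iS1 _ n1].
  case/and4P=> /asboolP srf2 iS2 _ n2 /(hang_inj srf1 srf2 iS1 iS2 n1 n2).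
  by case=> -> ->.
by move=> FR; rewrite !inE.
Qed.

Definition in_root_tree u j FR : bool := (u \in FR.2) && conn FR.1 j u.

Definition root_tree_count u j : nat := \sum_(FR in rooted_forests) in_root_tree u j FR.

Lemma in_root_tree_other_root u i j FR : srf FR -> i \in FR.2 -> i != u ->
  conn FR.1 j i -> in_root_tree u j FR = false.
Proof.
move=> srfFR iS iu ji; apply/negP => /andP[uS ju].
by move: iu; rewrite (srf_root_uniq srfFR iS ji uS ju) eqxx.
Qed.

Lemma in_root_tree_hang u i v j FR : srf FR -> i \in FR.2 -> i != u ->
  ~~ conn FR.1 v i ->
  in_root_tree u j (hang i v FR) = in_root_tree u j FR || conn FR.1 j i && in_root_tree u v FR.
Proof.
move=> srfFR iS iu nvi; rewrite /in_root_tree [(hang _ _ _).2]/= in_setD1 eq_sym iu /=.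
by case uS: (u \in FR.2); rewrite ?andbF //= (connect_hang _ srfFR) // eq_sym.
Qed.

Lemma hang_balance u i FR : srf FR -> i \in FR.2 -> i != u ->
  (degree e i).+1 * \sum_(v | e i v && ~~ conn FR.1 v i) in_root_tree u i (hang i v FR)
  = \sum_(j | e i j) in_root_tree u j FR
    + \sum_(v | e i v && ~~ conn FR.1 v i) \sum_(j | e i j) in_root_tree u j (hang i v FR).
Proof.
(* With M the number of neighbours of i in the tree of u and a (resp. K) the
   number of those in (resp. outside) the tree of i, both sides are (a + K).+1 * M. *)
move=> srfFR iS iu; pose x j := in_root_tree u j FR.
have x0 j : conn FR.1 j i -> x j = false := in_root_tree_other_root srfFR iS iu.
have hangE v j : ~~ conn FR.1 v i ->
    in_root_tree u j (hang i v FR) = x j + conn FR.1 j i * x v :> nat.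
  move=> nvi; rewrite in_root_tree_hang // -/(x j) -/(x v).
  by case ji: (conn FR.1 j i); rewrite ?(x0 _ ji) /= ?orbF ?addn0 ?mul1n.
set M := \sum_(v | e i v) x v; set a := \sum_(j | e i j) (conn FR.1 j i : nat).
set K := \sum_(v | e i v && ~~ conn FR.1 v i) 1.
have degE : degree e i = a + K.
  rewrite /degree -sum1_card (eq_bigl (e i)) => [|j]; last by rewrite inE.
  rewrite (bigID (fun j => conn FR.1 j i)) /= /a [X in X + _]big_mkcondr /=.
  by congr (_ + _); apply: eq_bigr => j _; case: ifP.
have sumT_x : \sum_(v | e i v && ~~ conn FR.1 v i) x v = M.
  rewrite /M [RHS](bigID (fun v => conn FR.1 v i)) /= [X in _ = X + _]big1 ?add0n //.
  by move=> v /andP[_ /x0 ->].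
have -> : \sum_(v | e i v && ~~ conn FR.1 v i) in_root_tree u i (hang i v FR) = M.
  by rewrite -sumT_x; apply: eq_bigr => v /andP[_ nvi]; rewrite hangE // connect0 mul1n x0.
have -> : \sum_(v | e i v && ~~ conn FR.1 v i) \sum_(j | e i j) in_root_tree u j (hang i v FR)
    = K * M + a * M.
  rewrite (eq_bigr (fun v => M + a * x v)) => [|v /andP[_ nvi]].
    rewrite big_split /= -big_distrr /= sumT_x; congr (_ + _).
    by rewrite /K big_distrl; apply: eq_bigr => v _ /=; rewrite mul1n.
  by rewrite (eq_bigr _ (fun j _ => hangE v j nvi)) big_split /= -big_distrl.
by rewrite degE; lia.
Qed.

Lemma root_tree_count_balance u i : i != u ->
  (degree e i).+1 * root_tree_count u i = \sum_(j | e i j) root_tree_count u j.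
Proof.
move=> iu; rewrite /root_tree_count exchange_big /=.
rewrite (bigID (fun FR => i \in FR.2)) [in RHS](bigID (fun FR => i \in FR.2)) /=.
rewrite [X in _ * (X + _)]big1 ?add0n => [|FR /andP[]]; last first.
  rewrite in_rooted_forests => /asboolP srfFR iS.
  by rewrite (in_root_tree_other_root srfFR iS iu).
rewrite !sum_nonroot_hang big_distrr -big_split /=.
apply: eq_bigr => FR /andP[]; rewrite in_rooted_forests => /asboolP srfFR iS.
exact: hang_balance.
Qed.

Lemma srf_trivial : srf (set0, setT).
Proof.
have noadj x y : sub_adj set0 x y = false by rewrite /sub_adj in_set0 andbF.
split; first split.
- by move=> f; rewrite in_set0.
- by move=> [|x [|y s]] // _ _; rewrite /cycle /= noadj.
move=> x; exists x; split; first by rewrite in_setT connect0.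
by move=> r [_ /connectP[[|y p] /=]]; [move=> _ -> | rewrite noadj].
Qed.

Lemma root_tree_count_gt0 u : 0 < root_tree_count u u.
Proof.
rewrite /root_tree_count (bigD1 (set0, setT)) /=; last first.
  by rewrite in_rooted_forests; apply/asboolP; apply: srf_trivial.
by rewrite /in_root_tree in_setT connect0.
Qed.

Lemma card_rooted_forests_at u : #|rooted_forests_at e u| = root_tree_count u u.
Proof.
rewrite -sum1_card /root_tree_count.
rewrite [LHS](eq_bigl [pred FR | (FR \in rooted_forests) && (u \in FR.2)]) => [|FR].
  by rewrite big_mkcondr; apply: eq_bigr => FR _; rewrite /in_root_tree connect0 andbT.
by rewrite !inE.
Qed.

Lemma sum_tree_size u :
  \sum_(FR in rooted_forests_at e u) tree_size FR.1 u = \sum_j root_tree_count u j.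
Proof.
rewrite /root_tree_count exchange_big /=.
rewrite (eq_bigl [pred FR | (FR \in rooted_forests) && (u \in FR.2)]) => [|FR]; last first.
  by rewrite !inE.
rewrite big_mkcondr; apply: eq_bigr => FR _; rewrite /in_root_tree.
case: (u \in FR.2) => /=; last by rewrite big1.
rewrite /tree_size -sum1_card big_mkcond; apply: eq_bigr => x _.
by rewrite inE connect_sub_adj_sym.
Qed.

End RootTreeCount.

Local Open Scope ring_scope.

Section ForestMatrix.
Variables (R : realFieldType) (n : nat) (e : rel 'I_n).
Hypotheses (e_sym : symmetric e) (e_irr : irreflexive e).

Local Notation A := (1%:M + laplacian R e).

Lemma degreeE i : (degree e i)%:R = \sum_(j | e i j) 1 :> R.
Proof. by rewrite /degree -sum1_card natr_sum; apply: eq_bigl => j; rewrite inE. Qed.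

Lemma I_laplacianE i j :
  A i j = (i == j)%:R * (degree e i).+1%:R - (e i j)%:R.
Proof.
rewrite !mxE; have -> : (if e i j then 1 else 0) = (e i j)%:R :> R by case: (e i j).
have [<- | ij] := eqVneq i j; rewrite /=.
  by rewrite e_irr -natr1 /=; ring.
by rewrite mul0r add0r.
Qed.

Lemma I_laplacian_mul_row (f : 'I_n -> R) i :
  \sum_j A i j * f j = (degree e i).+1%:R * f i - \sum_(j | e i j) f j.
Proof.
have Aii : A i i = (degree e i).+1%:R by rewrite I_laplacianE eqxx e_irr mul1r subr0.
rewrite (bigD1 i) //= Aii; congr (_ + _).
rewrite [in RHS]big_mkcond [in RHS](bigD1 i) //= e_irr add0r -sumrN.
apply: eq_bigr => j ji; rewrite I_laplacianE eq_sym (negPf ji) mul0r sub0r.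
by case: (e i j); rewrite ?mulN1r ?oppr0 ?mul0r.
Qed.

Lemma I_laplacian_sum_col j : \sum_i A i j = 1.
Proof.
transitivity (\sum_i A j i * 1).
  apply: eq_bigr => i _; rewrite mulr1 !I_laplacianE eq_sym e_sym.
  by have [-> | _] := eqVneq j i; rewrite ?mul0r.
by rewrite I_laplacian_mul_row mulr1 -degreeE -natr1 [_ + 1]addrC addrK.
Qed.

Definition root_tree_mx : 'M[R]_n := \matrix_(j, u) (root_tree_count e u j)%:R.

Definition root_tree_total u : nat := \sum_j root_tree_count e u j.

Lemma I_laplacian_mul_root_tree_mx :
  A *m root_tree_mx = diag_mx (\row_u (root_tree_total u)%:R).
Proof.
have offdiag i u : i != u -> (A *m root_tree_mx) i u = 0.
  move=> iu; rewrite mxE (eq_bigr (fun j => A i j * (root_tree_count e u j)%:R)); last first.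
    by move=> j _; rewrite [root_tree_mx _ _]mxE.
  by rewrite I_laplacian_mul_row -natr_sum -(root_tree_count_balance e_sym iu) natrM subrr.
apply/matrixP => i u; rewrite [RHS]mxE [_ 0 i]mxE; have [<- | iu] := eqVneq i u; last first.
  by rewrite mulr0n offdiag.
transitivity (\sum_k (A *m root_tree_mx) k i).
  by rewrite [RHS](bigD1 i) //= big1 ?addr0 ?mxE // => k ki; apply: offdiag.
rewrite (eq_bigr (fun k => \sum_j A k j * root_tree_mx j i)) => [|k _]; last by rewrite mxE.
rewrite mulr1n /root_tree_total natr_sum exchange_big /=; apply: eq_bigr => j _.
by rewrite -mulr_suml I_laplacian_sum_col mul1r mxE.
Qed.

Lemma root_tree_total_gt0 u : (0 < root_tree_total u)%N.
Proof.
rewrite /root_tree_total (bigD1 u) //=.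
exact: leq_trans (root_tree_count_gt0 e u) (leq_addr _ _).
Qed.

Lemma forest_matrixE j u :
  forest_matrix R e j u = (root_tree_count e u j)%:R / (root_tree_total u)%:R.
Proof.
(* The product identity also shows that I + L is invertible. *)
set D := diag_mx (\row_u ((root_tree_total u)%:R)^-1 : 'rV[R]_n).
have AC_D : A *m (root_tree_mx *m D) = 1%:M.
  rewrite mulmxA I_laplacian_mul_root_tree_mx mulmx_diag.
  by apply/matrixP => a b; rewrite !mxE divff // pnatr_eq0 -lt0n root_tree_total_gt0.
have [A_unit _] := mulmx1_unit AC_D.
have -> : forest_matrix R e = root_tree_mx *m D.
  by rewrite /forest_matrix -[RHS](mulKmx A_unit) AC_D mulmx1.
by rewrite mul_mx_diag !mxE.
Qed.

Lemma forest_matrix_diag_gt0 u : 0 < forest_matrix R e u u.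
Proof.
by rewrite forest_matrixE divr_gt0 // ltr0n ?root_tree_count_gt0 ?root_tree_total_gt0.
Qed.

Lemma s_val_forest_matrix u : s_val R e u = (forest_matrix R e u u)^-1.
Proof. by rewrite /s_val sum_tree_size card_rooted_forests_at forest_matrixE invf_div. Qed.

End ForestMatrix.

Lemma min_max_ratioV (R : realFieldType) (a b : R) : 0 < a -> 0 < b ->
  Num.min a^-1 b^-1 / Num.max a^-1 b^-1 = Num.min a b / Num.max a b.
Proof.
move=> a0 b0; have [ab | /ltW ba] := leP a b.
  have ba' : b^-1 <= a^-1 by rewrite lef_pV2 ?posrE.
  by rewrite (min_r ba') (max_l ba') invrK mulrC.
have ab' : a^-1 <= b^-1 by rewrite lef_pV2 ?posrE.
by rewrite (min_l ab') (max_r ab') invrK mulrC.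
Qed.

Unset Implicit Arguments.

Theorem theorem4p5 (R : realFieldType) (n : nat) (e : rel 'I_n)
  (He : simple_graph e) (u v : 'I_n) :
  forest_sim R e u v =
  Num.min (forest_matrix R e u u) (forest_matrix R e v v)
    / Num.max (forest_matrix R e u u) (forest_matrix R e v v).
Proof.
case: He => e_sym e_irr.
rewrite /forest_sim !s_val_forest_matrix //.
by apply: min_max_ratioV; apply: forest_matrix_diag_gt0.
Qed.
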